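(* Let $X$ be a countably infinite set. Let $\sigma$ be the map from the lattice $\mathrm{Cl}_{loc}(X)$ of local clones on $X$ into the lattice of partial clones of finite operations on $X$ which sends each local clone $\mathscr C$ to the set of all restrictions of operations of $\mathscr C$ to finite domains (i.e. all $f|_A$ with $f\in\mathscr C$ $n$-ary and $A\subseteq X^n$ finite). Then $\sigma$ is one-to-one and preserves arbitrary joins.
   Context: A clone on $X$ is a set of finitary operations $X^n\to X$ ($n\ge1$) containing all projections $\pi^n_k(x_1,\dots,x_n)=x_k$ and closed under composition. Giving $X$ the discrete topology and $X^{X^n}$ the product topology, a clone is local if for each $n$ its set of $n$-ary operations is closed in $X^{X^n}$; equivalently, an $n$-ary operation $g$ belongs to the clone whenever for every finite $B\subseteq X^n$ some $n$-ary operation of the clone agrees with $g$ on $B$. $\mathrm{Cl}_{loc}(X)$ is the complete lattice of local clones ordered by inclusion (join = smallest local clone containing the union). A partial operation of finite domain on $X$ is a map $A\to X$ with $A\subseteq X^n$ finite for some $n\ge1$. A partial clone of finite operations on $X$ is a set of partial operations of finite domain on $X$ containing all restrictions of projections to finite domains and closed under composition (where the composition $f(g_1,\dots,g_n)$ of partial operations is defined on those tuples where all $g_i$ are defined and $f$ is defined at the resulting tuple). The partial clones of finite operations on $X$, ordered by inclusion, form a complete lattice, whose join of a family is the smallest partial clone of finite operations containing its union. *)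

From mathcomp Require Import all_boot.
From Stdlib Require Import List.
Set Implicit Arguments. Unset Strict Implicit. Unset Printing Implicit Defensive.

Definition op (X : Type) := {n : nat & (('I_n -> X) -> X)}.
(* A partial operation of arity n: X^n -> option X (None = undefined). *)
Definition pop (X : Type) := {n : nat & (('I_n -> X) -> option X)}.

Definition proj (X : Type) (n : nat) (k : 'I_n) : ('I_n -> X) -> X := fun x => x k.

Definition clone (X : Type) (C : op X -> Prop) : Prop :=
  (forall o, C o -> 0 < projT1 o) /\
  (forall n (k : 'I_n), C (existT _ n (@proj X n k))) /\
  (forall n m (f : ('I_n -> X) -> X) (g : 'I_n -> ('I_m -> X) -> X),
      C (existT _ n f) -> (forall i, C (existT _ m (g i))) ->
      C (existT _ m (fun x => f (fun i => g i x)))).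

(* local: an n-ary g belongs to C whenever for every finite B ⊆ X^n
   (listed by s) some n-ary operation of C agrees with g on B. *)
Definition local_clone (X : Type) (C : op X -> Prop) : Prop :=
  clone C /\
  forall n (g : ('I_n -> X) -> X), 0 < n ->
    (forall s : list ('I_n -> X),
        exists f, C (existT _ n f) /\ forall x, In x s -> f x = g x) ->
    C (existT _ n g).

Definition loc_join (X : Type) (I : Type) (F : I -> op X -> Prop) : op X -> Prop :=
  fun o => forall D, local_clone D -> (forall i o', F i o' -> D o') -> D o.

Definition fin_dom (X : Type) n (h : ('I_n -> X) -> option X) : Prop :=
  exists s : list ('I_n -> X), forall x, h x <> None -> In x s.

Definition fin_restr (X : Type) n (f : ('I_n -> X) -> X)
    (h : ('I_n -> X) -> option X) : Prop :=
  fin_dom h /\ forall x v, h x = Some v -> v = f x.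

Definition is_pcomp (X : Type) n m (f : ('I_n -> X) -> option X)
    (g : 'I_n -> ('I_m -> X) -> option X) (h : ('I_m -> X) -> option X) : Prop :=
  forall x v, h x = Some v <->
    exists y : 'I_n -> X, (forall i, g i x = Some (y i)) /\ f y = Some v.

Definition partial_clone (X : Type) (P : pop X -> Prop) : Prop :=
  (forall p, P p -> 0 < projT1 p /\ fin_dom (projT2 p)) /\
  (forall n (k : 'I_n) h, 0 < n -> fin_restr (@proj X n k) h -> P (existT _ n h)) /\
  (forall n m (f : ('I_n -> X) -> option X) (g : 'I_n -> ('I_m -> X) -> option X)
      (h : ('I_m -> X) -> option X),
      P (existT _ n f) -> (forall i, P (existT _ m (g i))) -> is_pcomp f g h ->
      P (existT _ m h)).

Definition pclone_join (X : Type) (I : Type) (F : I -> pop X -> Prop) : pop X -> Prop :=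
  fun p => forall D, partial_clone D -> (forall i p', F i p' -> D p') -> D p.

Definition sigma (X : Type) (C : op X -> Prop) : pop X -> Prop :=
  fun p => exists f, C (existT _ (projT1 p) f) /\ fin_restr f (projT2 p).

(** The map [sigma] has an upper adjoint: a partial clone [P] is sent to the
    set [sigma_adj P] of total operations all of whose finite restrictions lie
    in [P], and [sigma_adj P] is always a local clone.  Locality of [C] gives
    [sigma_adj (sigma C) <= C], hence injectivity; and a lower adjoint between
    complete lattices preserves arbitrary joins. *)

From Stdlib Require Import List ClassicalEpsilon.
From Stdlib Require Import FunctionalExtensionality PropExtensionality.
From mathcomp Require Import all_boot.

Set Implicit Arguments.
Unset Strict Implicit.
Unset Printing Implicit Defensive.

Lemma pred_ext (T : Type) (P Q : T -> Prop) :
  (forall t, P t -> Q t) -> (forall t, Q t -> P t) -> P = Q.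
Proof.
move=> PQ QP; apply: functional_extensionality => t.
by apply: propositional_extensionality; split; [apply: PQ | apply: QP].
Qed.

Lemma ord_gt0 n (k : 'I_n) : 0 < n.
Proof. exact: leq_ltn_trans (leq0n k) (ltn_ord k). Qed.

Section Restriction.

Variables (X : Type) (n : nat).
Implicit Types (f : ('I_n -> X) -> X) (h : ('I_n -> X) -> option X).

Definition restr (P : ('I_n -> X) -> Prop) f : ('I_n -> X) -> option X :=
  fun x => if excluded_middle_informative (P x) then Some (f x) else None.

Lemma restrP P f x v : restr P f x = Some v -> P x /\ v = f x.
Proof. by rewrite /restr; case: excluded_middle_informative => // Px [<-]. Qed.

Lemma restr_in P f x : P x -> restr P f x = Some (f x).
Proof. by rewrite /restr; case: excluded_middle_informative. Qed.

Lemma fin_restr_restr P f (s : list ('I_n -> X)) :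
  (forall x, P x -> In x s) -> fin_restr f (restr P f).
Proof.
move=> Ps; split=> [|x v /restrP[] //].
exists s => x; case E: (restr P f x) => [v|//] _.
by apply: Ps; case: (restrP E).
Qed.

Lemma fin_restr_agree f f' h :
  fin_restr f h -> (forall x, h x <> None -> f x = f' x) -> fin_restr f' h.
Proof.
move=> [dom_h hf] ff'; split=> // x v hx.
by rewrite -ff' ?hx //; apply: hf.
Qed.

End Restriction.

Section Composition.

Variables (X : Type) (n m : nat).
Variables (F : ('I_n -> X) -> X) (G : 'I_n -> ('I_m -> X) -> X).

Definition comp_op : ('I_m -> X) -> X := fun x => F (fun i => G i x).

(* The domain of a composite is contained in that of each inner operation, so
   [0 < n] is what makes it finite. *)
Lemma fin_restr_pcomp f g h : 0 < n ->
  fin_restr F f -> (forall i, fin_restr (G i) (g i)) -> is_pcomp f g h ->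
  fin_restr comp_op h.
Proof.
move=> n_gt0 [_ fF] gG fgh; have [s dom_g0] := (gG (Ordinal n_gt0)).1.
split=> [|x v /fgh[y [gy fy]]].
  exists s => x; case E: (h x) => [v|//] _.
  by have [y [gy _]] := (fgh x v).1 E; apply: dom_g0; rewrite gy.
rewrite (fF _ _ fy) /comp_op; congr F; apply: functional_extensionality => i.
exact: (gG i).2.
Qed.

(* Restrict each [G i] to the domain of [h], and [F] to the image of that
   domain under [G]. *)
Lemma fin_restr_comp_split h : 0 < n -> fin_restr comp_op h ->
  exists f g, [/\ fin_restr F f, forall i, fin_restr (G i) (g i)
                & is_pcomp f g h].
Proof.
move=> n_gt0 [[s dom_h] hFG].
pose Gx x := fun i => G i x.
pose g i := restr (fun x => h x <> None) (G i).
pose f := restr (fun y => exists2 x, h x <> None & y = Gx x) F.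
exists f, g; split.
- apply: (@fin_restr_restr _ _ _ _ (map Gx s)) => _ [x hx ->].
  exact/in_map/dom_h.
- by move=> i; apply: (@fin_restr_restr _ _ _ _ s) => x /dom_h.
move=> x v; split=> [hxv | [y [gy fy]]].
  have hx : h x <> None by rewrite hxv.
  exists (Gx x); split=> [i|]; first exact: restr_in.
  by rewrite (hFG _ _ hxv) /f restr_in //; exists x.
have [hx _] := restrP (gy (Ordinal n_gt0)).
have [_ ->] := restrP fy.
have -> : y = Gx x.
  by apply: functional_extensionality => i; have [_ ->] := restrP (gy i).
by case E: (h x) => [w|//]; rewrite (hFG _ _ E).
Qed.

End Composition.

Section Adjunction.

Variable X : Type.
Implicit Types (C D : op X -> Prop) (P : pop X -> Prop).

Definition sigma_adj P : op X -> Prop :=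
  fun o => 0 < projT1 o /\
    forall h, fin_restr (projT2 o) h -> P (existT _ (projT1 o) h).

Lemma sigma_adjP C P : (forall o, C o -> 0 < projT1 o) ->
  (forall p, sigma C p -> P p) <-> (forall o, C o -> sigma_adj P o).
Proof.
move=> C_gt0; split=> [CP [n f] Cf | CP [n h] [f [Cf fh]]].
  by split=> [|h fh]; [apply: C_gt0 | apply: CP; exists f].
exact: (CP _ Cf).2.
Qed.

Lemma sigma_adj_local_clone P : partial_clone P -> local_clone (sigma_adj P).
Proof.
move=> [_ [P_proj P_comp]]; split; first split=> [o [] // | ].
  split=> [n k | n m f g [n_gt0 Pf] Pg].
    by split=> [|h]; [exact: ord_gt0 | apply: P_proj; exact: ord_gt0].
  split=> [|h /(fin_restr_comp_split n_gt0) [f' [g' [ff' gg' fgh]]]].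
    exact: (Pg (Ordinal n_gt0)).1.
  by apply: P_comp fgh => [|i]; [exact: Pf | exact: (Pg i).2 _ (gg' i)].
move=> n g n_gt0 g_approx; split=> // h [[s dom_h] hg].
have [f [[_ Pf] fg]] := g_approx s.
apply: Pf; apply: (fin_restr_agree (f := g)); first by split=> //; exists s.
by move=> x /dom_h /fg.
Qed.

Lemma sigma_adj_sigma D : local_clone D -> forall o, sigma_adj (sigma D) o -> D o.
Proof.
move=> [_ D_local] [n g] [/= n_gt0 sigma_g]; apply: D_local => // s.
have [f [Df [_ fg]]] :=
  sigma_g (restr (fun x => In x s) g) (@fin_restr_restr _ _ _ g s (fun x sx => sx)).
by exists f; split=> // x sx; apply/esym/fg/restr_in.
Qed.

Lemma sigma_partial_clone C : clone C -> partial_clone (sigma C).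
Proof.
move=> [C_gt0 [C_proj C_comp]]; split=> [[n h] [f [Cf fh]] | ].
  by split; [apply: C_gt0 Cf | case: fh].
split=> [n k h _ kh | n m f g h [F [CF fF]] g_sigma fgh].
  by exists (proj k); split.
have [G CG] : exists G : 'I_n -> ('I_m -> X) -> X,
    forall i, C (existT _ m (G i)) /\ fin_restr (G i) (g i).
  by apply: (ClassicalEpsilon.choice (fun i G => C (existT _ m G) /\ fin_restr G (g i))).
exists (comp_op F G); split; first by apply: C_comp => // i; case: (CG i).
by apply: fin_restr_pcomp fgh => // [|i]; [apply: C_gt0 CF | case: (CG i)].
Qed.

Lemma sigma_sub_reflect C D : (forall o, C o -> 0 < projT1 o) -> local_clone D ->
  (forall p, sigma C p -> sigma D p) -> forall o, C o -> D o.
Proof.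
move=> C_gt0 lD /(sigma_adjP _ C_gt0) C_adj o Co.
exact/(sigma_adj_sigma lD)/C_adj.
Qed.

Lemma sigma_mono C D : (forall o, C o -> D o) -> forall p, sigma C p -> sigma D p.
Proof. by move=> CD p [f [Cf fp]]; exists f; split=> //; apply: CD. Qed.

End Adjunction.

Lemma positive_arity_local_clone X : local_clone (fun o : op X => 0 < projT1 o).
Proof.
split=> [|n g n_gt0 _] //; split=> //.
split=> [n k | n m f g n_gt0 Pg]; first exact: ord_gt0.
exact: Pg (Ordinal n_gt0).
Qed.

Lemma loc_join_local_clone X I (F : I -> op X -> Prop) :
  (forall i, local_clone (F i)) -> local_clone (loc_join F).
Proof.
move=> lF; split; last first.
  move=> n g n_gt0 g_approx D lD FD; case: (lD) => _ D_local.
  apply: D_local => // s; have [f [Jf fg]] := g_approx s.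
  by exists f; split=> //; apply: Jf.
split=> [o Jo | ].
  apply: (Jo _ (positive_arity_local_clone X)) => i o' Fo'.
  by case: (lF i) => [[F_gt0 _] _]; apply: F_gt0.
split=> [n k D [[_ [D_proj _]] _] _ | n m f g Jf Jg D lD FD] //.
by case: (lD) => [[_ [_ D_comp]] _]; apply: D_comp => [|i]; [apply: Jf | apply: Jg].
Qed.

Theorem proposition2p8 (X : Type) (Xcount : exists e : nat -> X, bijective e) :
  (forall C : op X -> Prop, local_clone C -> partial_clone (sigma C)) /\
  (forall C D : op X -> Prop, local_clone C -> local_clone D -> sigma C = sigma D -> C = D) /\
  (forall (I : Type) (F : I -> op X -> Prop), (forall i, local_clone (F i)) ->
     sigma (loc_join F) = pclone_join (fun i => sigma (F i))).
Proof.
have arity_gt0 (C : op X -> Prop) : local_clone C -> forall o, C o -> 0 < projT1 o.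
  by case=> [[]].
split; first by move=> C [cC _]; apply: sigma_partial_clone.
split=> [C D lC lD eCD | I F lF].
  by apply: pred_ext; [apply: (sigma_sub_reflect (arity_gt0 _ lC) lD)
                     | apply: (sigma_sub_reflect (arity_gt0 _ lD) lC)]; rewrite eCD.
have lJ := loc_join_local_clone lF.
apply: pred_ext => [p Jp Q pcQ FQ | p Jp].
  apply: (sigma_adjP _ (arity_gt0 _ lJ)).2 Jp => o Jo.
  apply: Jo (sigma_adj_local_clone pcQ) _ => i.
  by apply/(sigma_adjP _ (arity_gt0 _ (lF i))); apply: FQ.
apply: Jp; first exact: sigma_partial_clone lJ.1.
by move=> i; apply: sigma_mono => o Fo D lD FD; apply: FD Fo.
Qed.
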